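(* Assume that Hypotheses \textbf{H1} and \textbf{H2} hold. The steady states $\mathcal{E}_{00}^{02}$, $\mathcal{E}_{00}^{12}$, $\mathcal{E}_{10}^{12}$, $\mathcal{E}_{02}^{01}$, $\mathcal{E}_{02}^{11}$ and $\mathcal{E}_{12}^{11}$ of the system are unstable when they exist.
   Context: Consider the system of two interconnected chemostats in series \[ \begin{aligned} \dot{S}_1^1 &= D_1(S_1^{\text{in}}- S_1^1)-k_1\mu_1(S_1^1) X_1^1, & \dot{X}_1^1 &=(\mu_1(S_1^1) - \alpha D_1)X_1^1,\\ \dot{S}_2^1 &= D_1(S_2^{\text{in}}- S_2^1)+k_2\mu_1(S_1^1)X_1^1-k_3\mu_2(S_2^1) X_2^1, & \dot{X}_2^1 &=(\mu_2(S_2^1) - \alpha D_1)X_2^1,\\ \dot{S}_1^2 &= D_2(S_1^1- S_1^2)-k_1\mu_1(S_1^2) X_1^2, & \dot{X}_1^2 &= \alpha D_2(X_1^1- X_1^2)+\mu_1(S_1^2)X_1^2,\\ \dot{S}_2^2 &= D_2(S_2^1- S_2^2)+k_2\mu_1(S_1^2)X_1^2-k_3\mu_2(S_2^2) X_2^2, & \dot{X}_2^2 &= \alpha D_2(X_2^1- X_2^2)+\mu_2(S_2^2)X_2^2, \end{aligned} \] where $D_i=D/r_i$ with $r_1=r\in(0,1)$, $r_2=1-r$, $\alpha\in(0,1)$, and $k_1,k_2,k_3>0$. The growth functions are $\mathcal{C}^1(\mathbb{R}_+)$ and satisfy: \textbf{H1}: $\mu_1(0)=0$, $\mu_1(+\infty)=m_1$,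 $\mu_1'(S_1)>0$ for all $S_1>0$; \textbf{H2}: $\mu_2(0)=0$, $\mu_2(+\infty)=0$, and there exists $S_2^{\text{m}}>0$ with $\mu_2'>0$ on $(0,S_2^{\text{m}})$ and $\mu_2'<0$ on $(S_2^{\text{m}},\infty)$. Let $\lambda_1^i$ be the solution of $\mu_1(S_1)=\alpha D_i$ and $\lambda_2^{i1}<\lambda_2^{i2}$ the two solutions of $\mu_2(S_2)=\alpha D_i$, $i=1,2$. A steady state $\mathcal{E}_{ij}^{kl}$ is labeled as follows: the lower indices refer to reactor 1 and the upper to reactor 2; the first index is $1$ if the first biomass ($X_1^1$, resp. $X_1^2$) is positive and $0$ if it is zero; the second index is $0$ if the second biomass ($X_2^1$, resp. $X_2^2$) is zero and otherwise indicates the type of positive second biomass. Concretely: $\mathcal{E}_{00}^{02}$ has reactor 1 at washout $(S_1^{\text{in}},0,S_2^{\text{in}},0)$ and reactor 2 equal to $(S_1^{\text{in}},0,\lambda_2^{22},(S_2^{\text{in}}-\lambda_2^{22})/(\alpha k_3))$; $\mathcal{E}_{00}^{12}$ has reactor 1 at washout and reactor 2 equal to $(\lambda_1^2,(S_1^{\text{in}}-\lambda_1^2)/(\alpha k_1),\lambda_2^{22},X_2^2)$ with $X_2^2>0$; $\mathcal{E}_{10}^{12}$ has reactor 1 equal to $(\lambda_1^1,(S_1^{\text{in}}-\lambda_1^1)/(\alpha k_1),S_2^{\text{in}}+\tfrac{k_2}{k_1}(S_1^{\text{in}}-\lambda_1^1),0)$ and reactor 2 with $X_1^2>0$, $S_2^2=\lambda_2^{22}$,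 $X_2^2>0$; $\mathcal{E}_{02}^{01}$ and $\mathcal{E}_{02}^{11}$ have reactor 1 equal to $(S_1^{\text{in}},0,\lambda_2^{12},(S_2^{\text{in}}-\lambda_2^{12})/(\alpha k_3))$ and, in reactor 2, $X_1^2=0,X_2^2>0$ resp. $X_1^2>0,X_2^2>0$; $\mathcal{E}_{12}^{11}$ has reactor 1 equal to $(\lambda_1^1,(S_1^{\text{in}}-\lambda_1^1)/(\alpha k_1),\lambda_2^{12},X_2^1)$ with $X_2^1>0$, and in reactor 2 $X_1^2>0$, $X_2^2>0$. *)

From HB Require Import structures.
From mathcomp Require Import all_boot all_order all_algebra.
From mathcomp Require Import all_classical all_reals all_analysis.
From mathcomp Require Import complex.
Set Implicit Arguments. Unset Strict Implicit. Unset Printing Implicit Defensive.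
Import Order.TTheory GRing.Theory Num.Theory.
Local Open Scope ring_scope.

Section Chemostat.
Variable R : realType.

(* State vector ordering (indices 0..7):
   0: S_1^1, 1: X_1^1, 2: S_2^1, 3: X_2^1,   (reactor 1)
   4: S_1^2, 5: X_1^2, 6: S_2^2, 7: X_2^2.   (reactor 2) *)
Definition stc (x : 'rV[R]_8) (k : nat) : R := x ord0 (inord k).

Definition chemo_field (mu1 mu2 : R -> R) (D r alpha k1 k2 k3 S1in S2in : R)
  (x : 'rV[R]_8) : 'rV[R]_8 :=
  let D1 := D / r in let D2 := D / (1 - r) in
  let S11 := stc x 0 in let X11 := stc x 1 in
  let S21 := stc x 2 in let X21 := stc x 3 in
  let S12 := stc x 4 in let X12 := stc x 5 in
  let S22 := stc x 6 in let X22 := stc x 7 in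
  \row_(i < 8)
    match val i with
    | 0 => D1 * (S1in - S11) - k1 * mu1 S11 * X11
    | 1 => (mu1 S11 - alpha * D1) * X11
    | 2 => D1 * (S2in - S21) + k2 * mu1 S11 * X11 - k3 * mu2 S21 * X21
    | 3 => (mu2 S21 - alpha * D1) * X21
    | 4 => D2 * (S11 - S12) - k1 * mu1 S12 * X12
    | 5 => alpha * D2 * (X11 - X12) + mu1 S12 * X12
    | 6 => D2 * (S21 - S22) + k2 * mu1 S12 * X12 - k3 * mu2 S22 * X22
    | _ => alpha * D2 * (X21 - X22) + mu2 S22 * X22
    end.

Definition jacobian (F : 'rV[R]_8 -> 'rV[R]_8) (x : 'rV[R]_8) : 'M[R]_8 :=
  \matrix_(i < 8, j < 8)
    derive1 (fun t : R => F (x + t *: delta_mx ord0 j) ord0 i) 0.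

Definition unstable (F : 'rV[R]_8 -> 'rV[R]_8) (x : 'rV[R]_8) : Prop :=
  exists z : R[i],
    eigenvalue (map_mx (fun a : R => (a%:C)%C) (jacobian F x)) z /\ 0 < complex.Re z.

Definition steady (F : 'rV[R]_8 -> 'rV[R]_8) (x : 'rV[R]_8) : Prop :=
  F x = 0 /\ forall i : 'I_8, 0 <= x ord0 i.

Definition is_lam1 (mu1 : R -> R) (a s : R) : Prop := 0 < s /\ mu1 s = a.
(* lambda_2^{i2}: the larger of the two solutions of mu2(S) = a. *)
Definition is_lam2_2 (mu2 : R -> R) (a s : R) : Prop :=
  0 < s /\ mu2 s = a /\ exists s', 0 < s' < s /\ mu2 s' = a.

End Chemostat.
Arguments stc {R} x k%_N.

From Pilot Require Import Defs.
From HB Require Import structures.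
From mathcomp Require Import all_boot all_order all_algebra.
From mathcomp Require Import all_classical all_reals all_analysis.
From mathcomp Require Import complex.
From mathcomp Require Import ring lra zify.
Import Order.TTheory GRing.Theory Num.Theory numFieldNormedType.Exports.
Local Open Scope ring_scope.
Local Open Scope classical_set_scope.

(* Order the coordinates as the pairs (S_1^1, X_1^1), (S_2^1, X_2^1),
   (S_1^2, X_1^2), (S_2^2, X_2^2). Each pair only depends on itself and on
   earlier pairs, so the Jacobian is block lower triangular and the spectrum
   of every 2x2 diagonal block is part of its spectrum. In each of the six
   steady states some reactor i carries the second species with X_2 > 0 at
   S_2 = lambda_2^{i2}, beyond the maximum S_2^m of mu2, so mu2'(S_2) < 0.
   Since mu2(S_2) = alpha D_i, the (S_2, X_2) block there is
   [[*, -k3 mu2(S_2)], [X_2 mu2'(S_2), 0]], whose determinant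
   k3 alpha D_i X_2 mu2'(S_2) is negative, and a real 2x2 matrix with negative
   determinant has a positive eigenvalue. Neither H1 nor the remaining
   steady-state equations play any role. *)

Section Derivatives.
Variable R : realType.
Implicit Types (g mu : R -> R) (s b c : R).

Lemma derive1_const g : (forall t, g t = g 0) -> derive1 g 0 = 0.
Proof.
move=> gE; have -> : g = cst (g 0) by apply/funext => t; exact: gE.
exact: derive1_cst.
Qed.

Lemma derive1_affine g b : (forall t, g t = g 0 + b * t) -> derive1 g 0 = b.
Proof.
move=> gE; have -> : g = cst (g 0) + b \*: id by apply/funext => t; rewrite gE.
have id_derivable : derivable (@id R) 0 1 by exact: derivable_id.
by rewrite derive1E deriveD ?deriveZ ?derive_cst ?derive_id ?add0r ?[_%:A]mulr1.
Qed.

Lemma derive1_shift mu s : derive1 (fun t => mu (t + s)) 0 = derive1 mu s.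
Proof.
rewrite !derive1E /derive /= add0r.
by congr lim; apply: (congr1 (fmap ^~ _)); apply/funext => h; rewrite addr0.
Qed.

Lemma derivable_shift mu s : derivable mu s 1 -> derivable (fun t => mu (t + s)) 0 1.
Proof.
move=> /derivable1P.
by rewrite (_ : (fun h : R => mu (h *: 1 + s)) = (fun t => mu (t + s))) //;
  apply/funext => h; rewrite [h *: 1]mulr1.
Qed.

Lemma derive1_shift_scale g mu s c : derivable mu s 1 ->
  (forall t, g t = g 0 + c * (mu (t + s) - mu s)) -> derive1 g 0 = c * derive1 mu s.
Proof.
move=> dmu gE.
have -> : g = cst (g 0 - c * mu s) + c \*: (fun t => mu (t + s)).
  by apply/funext => t; rewrite gE !fctE /= -[c *: _]/(c * _); ring.
have dsh := @derivable_shift mu s dmu.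
by rewrite derive1E deriveD ?deriveZ ?derive_cst -?derive1E ?derive1_shift ?add0r //;
  exact: derivableZ.
Qed.

End Derivatives.

Lemma det_mx22 (R : comNzRingType) (M : 'M[R]_2) : \det M = M 0 0 * M 1 1 - M 0 1 * M 1 0.
Proof.
rewrite (expand_det_row _ 0) !big_ord_recl big_ord0 /cofactor !det_mx11 !mxE /=.
rewrite expr0 expr1 mul1r mulN1r mulrN addr0.
by congr (M _ _ * M _ _ - M _ _ * M _ _); apply: val_inj.
Qed.

Local Notation ord8 k := (@Ordinal 8 k isT).

Section BlockEigenvalues.
Context {K : fieldType}.

Lemma eigenvalue_det n (A : 'M[K]_n) a : eigenvalue A a = (\det (a%:M - A) == 0).
Proof.
apply/eigenvalueP/det0P => [[v vA v_nz] | [v v_nz vA]]; exists v => //.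
  by rewrite mulmxBr vA mul_mx_scalar subrr.
by apply/eqP; rewrite -mul_mx_scalar eq_sym -subr_eq0 -mulmxBr vA.
Qed.

Lemma eigenvalue_lblock m n (A : 'M[K]_(m + n)) a : ursubmx A = 0 ->
  eigenvalue A a = eigenvalue (ulsubmx A) a || eigenvalue (drsubmx A) a.
Proof.
move=> A0; rewrite -[A in LHS]submxK A0 !eigenvalue_det (scalar_mx_block m n a).
by rewrite opp_block_mx add_block_mx oppr0 addr0 det_lblock mulf_eq0.
Qed.

Definition pair_block_lower (A : 'M[K]_8) :=
  forall i j : 'I_8, (i %/ 2 < j %/ 2)%N -> A i j = 0.

Definition block23 (A : 'M[K]_8) : 'M[K]_2 := @drsubmx K 2 2 2 2 (@ulsubmx K 4 4 4 4 A).
Definition block67 (A : 'M[K]_8) : 'M[K]_2 := @drsubmx K 6 2 6 2 A.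

Lemma det_block23 A : \det (block23 A) =
  A (ord8 2) (ord8 2) * A (ord8 3) (ord8 3) - A (ord8 2) (ord8 3) * A (ord8 3) (ord8 2).
Proof.
rewrite det_mx22 !mxE.
suff [-> ->] : lshift 4 (rshift 2 (0 : 'I_2)) = ord8 2 /\
               lshift 4 (rshift 2 (1 : 'I_2)) = ord8 3 by [].
by split; apply: val_inj.
Qed.

Lemma det_block67 A : \det (block67 A) =
  A (ord8 6) (ord8 6) * A (ord8 7) (ord8 7) - A (ord8 6) (ord8 7) * A (ord8 7) (ord8 6).
Proof.
rewrite det_mx22 !mxE.
suff [-> ->] : rshift 6 (0 : 'I_2) = ord8 6 /\ rshift 6 (1 : 'I_2) = ord8 7 by [].
by split; apply: val_inj.
Qed.

Lemma eigenvalue_block23 A a : pair_block_lower A ->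
  eigenvalue (block23 A) a -> eigenvalue A a.
Proof.
move=> A_low eig_a.
rewrite (@eigenvalue_lblock 4 4) ?(@eigenvalue_lblock 2 2) ?eig_a ?orbT //.
all: by apply/matrixP => i j; rewrite !mxE A_low //=; have := ltn_ord i; lia.
Qed.

Lemma eigenvalue_block67 A a : pair_block_lower A ->
  eigenvalue (block67 A) a -> eigenvalue A a.
Proof.
move=> A_low eig_a; rewrite (@eigenvalue_lblock 6 2) ?eig_a ?orbT //.
by apply/matrixP => i j; rewrite !mxE A_low //=; have := ltn_ord i; lia.
Qed.

End BlockEigenvalues.

Lemma eigenvalue_gt0_of_det_lt0 (R : rcfType) (M : 'M[R]_2) :
  \det M < 0 -> exists2 a, 0 < a & eigenvalue M a.
Proof.
move=> det_lt0; set t := M 0 0 + M 1 1.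
set s := Num.sqrt (t ^+ 2 - 4 * \det M).
have s_ge0 : 0 <= s := sqrtr_ge0 _.
have s2 : s ^+ 2 = t ^+ 2 - 4 * \det M by rewrite sqr_sqrtr //; nra.
exists ((t + s) / 2); first by apply: divr_gt0 => //; nra.
rewrite eigenvalue_det det_mx22 !mxE /= mulr1n mulr0n !sub0r mulrNN.
rewrite det_mx22 -/t in s2.
apply/eqP; have -> : ((t + s) / 2 - M 0 0) * ((t + s) / 2 - M 1 1) - M 0 1 * M 1 0
  = (s ^+ 2 - (t ^+ 2 - 4 * (M 0 0 * M 1 1 - M 0 1 * M 1 0))) / 4 by rewrite /t; field.
by rewrite s2 subrr mul0r.
Qed.

Section ChemostatJacobian.
Variable R : realType.

(* Plain [jacobian] would be MathComp-Analysis' Jacobian, imported after Defs. *)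
Lemma unstable_of_eigenvalue_gt0 {G : 'rV[R]_8 -> 'rV[R]_8} {x} {a : R} :
  0 < a -> eigenvalue (Defs.jacobian G x) a -> unstable G x.
Proof.
move=> a_gt0 eig_a; exists a%:C%C; split => //.
by rewrite (eigenvalue_map (real_complex R)).
Qed.

Lemma jacobian_eq0 (G : 'rV[R]_8 -> 'rV[R]_8) x i j :
  (forall t, G (x + t *: delta_mx 0 j) 0 i = G x 0 i) -> Defs.jacobian G x i j = 0.
Proof. by move=> Gj; rewrite mxE; apply: derive1_const => t; rewrite !Gj. Qed.

Lemma stc_shift (x : 'rV[R]_8) t (j : 'I_8) k : (k < 8)%N ->
  stc (x + t *: delta_mx 0 j) k = (if k == j then t + stc x k else stc x k).
Proof.
move=> k_lt8; rewrite /stc !mxE eqxx /=.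
have -> : (inord k == j) = (k == j).
  by apply/eqP/eqP => [<- | ->]; [rewrite inordK | rewrite inord_val].
by case: eqP; rewrite ?mulr1 ?mulr0 ?addr0 // addrC.
Qed.

Variables (mu1 mu2 : R -> R) (D r alpha k1 k2 k3 S1in S2in : R).
Local Notation F := (chemo_field mu1 mu2 D r alpha k1 k2 k3 S1in S2in).
Local Notation J x := (Defs.jacobian F x).

Lemma chemo_field_shift_later_pair x t (i j : 'I_8) : (i %/ 2 < j %/ 2)%N ->
  F (x + t *: delta_mx 0 j) 0 i = F x 0 i.
Proof.
move=> ij.
have stc_fixed k : (k <= 2 * (i %/ 2) + 1)%N -> stc (x + t *: delta_mx 0 j) k = stc x k.
  by move=> ki; have i8 := ltn_ord i; have j8 := ltn_ord j; rewrite stc_shift ?ifN //; lia.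
rewrite /chemo_field !mxE.
by case: i ij stc_fixed => [[|[|[|[|[|[|[|[|//]]]]]]]] ?] _ stc_fixed /=; rewrite !stc_fixed.
Qed.

Lemma jacobian_pair_block_lower x : pair_block_lower (J x).
Proof. by move=> i j ij; apply: jacobian_eq0 => t; exact: chemo_field_shift_later_pair. Qed.

Lemma det_jacobian_block23 x :
  derivable mu2 (stc x 2) 1 -> mu2 (stc x 2) = alpha * (D / r) ->
  \det (block23 (J x)) = k3 * mu2 (stc x 2) * stc x 3 * derive1 mu2 (stc x 2).
Proof.
move=> d2 mu2S; rewrite det_block23.
have -> : J x (ord8 2) (ord8 3) = - (k3 * mu2 (stc x 2)).
  rewrite mxE; apply: derive1_affine => t.
  by rewrite /chemo_field !mxE !stc_shift //=; ring.
have -> : J x (ord8 3) (ord8 2) = stc x 3 * derive1 mu2 (stc x 2).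
  rewrite mxE; apply: derive1_shift_scale => // t.
  by rewrite /chemo_field !mxE !stc_shift //= add0r; ring.
have -> : J x (ord8 3) (ord8 3) = 0.
  rewrite mxE; apply: derive1_const => t.
  by rewrite /chemo_field !mxE !stc_shift //= mu2S; ring.
ring.
Qed.

Lemma det_jacobian_block67 x :
  derivable mu2 (stc x 6) 1 -> mu2 (stc x 6) = alpha * (D / (1 - r)) ->
  \det (block67 (J x)) = k3 * mu2 (stc x 6) * stc x 7 * derive1 mu2 (stc x 6).
Proof.
move=> d6 mu2S; rewrite det_block67.
have -> : J x (ord8 6) (ord8 7) = - (k3 * mu2 (stc x 6)).
  rewrite mxE; apply: derive1_affine => t.
  by rewrite /chemo_field !mxE !stc_shift //=; ring.
have -> : J x (ord8 7) (ord8 6) = stc x 7 * derive1 mu2 (stc x 6).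
  rewrite mxE; apply: derive1_shift_scale => // t.
  by rewrite /chemo_field !mxE !stc_shift //= add0r; ring.
have -> : J x (ord8 7) (ord8 7) = 0.
  rewrite mxE; apply: derive1_const => t.
  by rewrite /chemo_field !mxE !stc_shift //= mu2S; ring.
ring.
Qed.

Lemma unstable_of_species2_saddle_reactor1 x :
  0 < k3 -> 0 < alpha * (D / r) -> 0 < stc x 3 -> derivable mu2 (stc x 2) 1 ->
  mu2 (stc x 2) = alpha * (D / r) -> derive1 mu2 (stc x 2) < 0 -> unstable F x.
Proof.
move=> k3_gt0 aD_gt0 X_gt0 d2 mu2S d_lt0.
have [a a_gt0 eig_a] : exists2 a, 0 < a & eigenvalue (block23 (J x)) a.
  apply: eigenvalue_gt0_of_det_lt0.
  rewrite det_jacobian_block23 // mu2S pmulr_rlt0; first exact: d_lt0.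
  by apply: mulr_gt0 => //; apply: mulr_gt0.
apply: (unstable_of_eigenvalue_gt0 a_gt0).
exact: eigenvalue_block23 (jacobian_pair_block_lower x) eig_a.
Qed.

Lemma unstable_of_species2_saddle_reactor2 x :
  0 < k3 -> 0 < alpha * (D / (1 - r)) -> 0 < stc x 7 -> derivable mu2 (stc x 6) 1 ->
  mu2 (stc x 6) = alpha * (D / (1 - r)) -> derive1 mu2 (stc x 6) < 0 -> unstable F x.
Proof.
move=> k3_gt0 aD_gt0 X_gt0 d6 mu2S d_lt0.
have [a a_gt0 eig_a] : exists2 a, 0 < a & eigenvalue (block67 (J x)) a.
  apply: eigenvalue_gt0_of_det_lt0.
  rewrite det_jacobian_block67 // mu2S pmulr_rlt0; first exact: d_lt0.
  by apply: mulr_gt0 => //; apply: mulr_gt0.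
apply: (unstable_of_eigenvalue_gt0 a_gt0).
exact: eigenvalue_block67 (jacobian_pair_block_lower x) eig_a.
Qed.

End ChemostatJacobian.

Lemma is_lam2_2_derive1_lt0 (R : realType) (mu2 : R -> R) a l :
  (forall x, 0 < x -> derivable mu2 x 1) ->
  (exists2 Sm : R, 0 < Sm &
     (forall x, 0 < x < Sm -> 0 < derive1 mu2 x) /\
     (forall x, Sm < x -> derive1 mu2 x < 0)) ->
  is_lam2_2 mu2 a l -> derive1 mu2 l < 0.
Proof.
move=> der [Sm _ [incr decr]] [_ [mu2l [s [/andP[s_gt0 s_lt_l] mu2s]]]].
apply: decr; rewrite ltNge; apply/negP => l_le_Sm.
have mu2_incr : {in `[s, l]%R &, {homo mu2 : y z / y < z}}.
  apply: gtr0_derive1_lt_cc => [y | y |].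
  - by rewrite in_itv /= => /andP[sy _]; apply: der; exact: lt_trans sy.
  - rewrite in_itv /= => /andP[sy yl]; apply: incr.
    by rewrite (lt_trans s_gt0 sy) (lt_le_trans yl l_le_Sm).
  - apply: derivable_within_continuous => y; rewrite in_itv /= => /andP[sy _].
    by apply: der; exact: lt_le_trans sy.
have := mu2_incr s l; rewrite !in_itv /= !lexx (ltW s_lt_l) mu2l mu2s ltxx.
by move=> /(_ isT isT s_lt_l).
Qed.

Theorem proposition4 (R : realType) (mu1 mu2 : R -> R)
  (D r alpha k1 k2 k3 S1in S2in m1 : R)
  (hD : 0 < D) (hr : 0 < r < 1) (halpha : 0 < alpha < 1)
  (hk1 : 0 < k1) (hk2 : 0 < k2) (hk3 : 0 < k3)
  (hS1in : 0 < S1in) (hS2in : 0 < S2in)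
  (* mu1, mu2 of class C^1 on R_+ *)
  (mu1_cont0 : mu1 x @[x --> (0:R)^'+] --> mu1 0)
  (mu1_der : forall x : R, 0 < x -> derivable mu1 x 1)
  (mu1_der_cont : forall x : R, 0 < x -> {for x, continuous (derive1 mu1)})
  (mu2_cont0 : mu2 x @[x --> (0:R)^'+] --> mu2 0)
  (mu2_der : forall x : R, 0 < x -> derivable mu2 x 1)
  (mu2_der_cont : forall x : R, 0 < x -> {for x, continuous (derive1 mu2)})
  (* H1 *)
  (H1_0 : mu1 0 = 0) (H1_inf : mu1 x @[x --> +oo%R] --> m1)
  (H1_incr : forall x : R, 0 < x -> 0 < derive1 mu1 x)
  (* H2 *)
  (H2_0 : mu2 0 = 0) (H2_inf : mu2 x @[x --> +oo%R] --> 0)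
  (H2_shape : exists2 Sm : R, 0 < Sm &
     (forall x, 0 < x < Sm -> 0 < derive1 mu2 x) /\
     (forall x, Sm < x -> derive1 mu2 x < 0)) :
  let D1 := D / r in let D2 := D / (1 - r) in
  let F := chemo_field mu1 mu2 D r alpha k1 k2 k3 S1in S2in in
  (* E_00^02 *)
  (forall x l22, steady F x -> is_lam2_2 mu2 (alpha * D2) l22 ->
     stc x 0 = S1in -> stc x 1 = 0 -> stc x 2 = S2in -> stc x 3 = 0 ->
     stc x 4 = S1in -> stc x 5 = 0 -> stc x 6 = l22 ->
     stc x 7 = (S2in - l22) / (alpha * k3) -> 0 < stc x 7 ->
     unstable F x) /\
  (* E_00^12 *)
  (forall x l1 l22, steady F x -> is_lam1 mu1 (alpha * D2) l1 ->
     is_lam2_2 mu2 (alpha * D2) l22 ->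
     stc x 0 = S1in -> stc x 1 = 0 -> stc x 2 = S2in -> stc x 3 = 0 ->
     stc x 4 = l1 -> stc x 5 = (S1in - l1) / (alpha * k1) -> 0 < stc x 5 ->
     stc x 6 = l22 -> 0 < stc x 7 ->
     unstable F x) /\
  (* E_10^12 *)
  (forall x l1 l22, steady F x -> is_lam1 mu1 (alpha * D1) l1 ->
     is_lam2_2 mu2 (alpha * D2) l22 ->
     stc x 0 = l1 -> stc x 1 = (S1in - l1) / (alpha * k1) -> 0 < stc x 1 ->
     stc x 2 = S2in + k2 / k1 * (S1in - l1) -> stc x 3 = 0 ->
     0 < stc x 5 -> stc x 6 = l22 -> 0 < stc x 7 ->
     unstable F x) /\
  (* E_02^01 *)
  (forall x l12, steady F x -> is_lam2_2 mu2 (alpha * D1) l12 ->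
     stc x 0 = S1in -> stc x 1 = 0 -> stc x 2 = l12 ->
     stc x 3 = (S2in - l12) / (alpha * k3) -> 0 < stc x 3 ->
     stc x 5 = 0 -> 0 < stc x 7 ->
     unstable F x) /\
  (* E_02^11 *)
  (forall x l12, steady F x -> is_lam2_2 mu2 (alpha * D1) l12 ->
     stc x 0 = S1in -> stc x 1 = 0 -> stc x 2 = l12 ->
     stc x 3 = (S2in - l12) / (alpha * k3) -> 0 < stc x 3 ->
     0 < stc x 5 -> 0 < stc x 7 ->
     unstable F x) /\
  (* E_12^11 *)
  (forall x l1 l12, steady F x -> is_lam1 mu1 (alpha * D1) l1 ->
     is_lam2_2 mu2 (alpha * D1) l12 ->
     stc x 0 = l1 -> stc x 1 = (S1in - l1) / (alpha * k1) -> 0 < stc x 1 ->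
     stc x 2 = l12 -> 0 < stc x 3 ->
     0 < stc x 5 -> 0 < stc x 7 ->
     unstable F x).
Proof.
move=> D1 D2 F.
case/andP: hr => r_gt0 r_lt1; case/andP: halpha => alpha_gt0 _.
have aD1_gt0 : 0 < alpha * D1 by rewrite mulr_gt0 ?divr_gt0.
have aD2_gt0 : 0 < alpha * D2 by rewrite mulr_gt0 ?divr_gt0 ?subr_gt0.
have saddle1 x l : is_lam2_2 mu2 (alpha * D1) l -> stc x 2 = l -> 0 < stc x 3 ->
    unstable F x.
  move=> hl e2 X_gt0; have [l_gt0 [mu2l _]] := hl.
  apply: unstable_of_species2_saddle_reactor1; rewrite ?e2 ?mu2l //.
    exact: mu2_der.
  exact: is_lam2_2_derive1_lt0 mu2_der H2_shape hl.
have saddle2 x l : is_lam2_2 mu2 (alpha * D2) l -> stc x 6 = l -> 0 < stc x 7 ->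
    unstable F x.
  move=> hl e6 X_gt0; have [l_gt0 [mu2l _]] := hl.
  apply: unstable_of_species2_saddle_reactor2; rewrite ?e6 ?mu2l //.
    exact: mu2_der.
  exact: is_lam2_2_derive1_lt0 mu2_der H2_shape hl.
split; [|split; [|split; [|split; [|split]]]].
- by move=> x l _ hl _ _ _ _ _ _ e6 _ X_gt0; exact: saddle2 hl e6 X_gt0.
- by move=> x _ l _ _ hl _ _ _ _ _ _ _ e6 X_gt0; exact: saddle2 hl e6 X_gt0.
- by move=> x _ l _ _ hl _ _ _ _ _ _ e6 X_gt0; exact: saddle2 hl e6 X_gt0.
- by move=> x l _ hl _ _ e2 _ X_gt0 _ _; exact: saddle1 hl e2 X_gt0.
- by move=> x l _ hl _ _ e2 _ X_gt0 _ _; exact: saddle1 hl e2 X_gt0.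
- by move=> x _ l _ _ hl _ _ _ e2 X_gt0 _ _; exact: saddle1 hl e2 X_gt0.
Qed.
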